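(* Let $n\ge 3$ and $1\le k\le n-2$. Then $rc^*(C_n([k]))=src^*(C_n([k]))=\lceil n/k\rceil$, where $[k]=\{1,2,\dots,k\}$.
   Context: For $n\ge 2$ and $S\subseteq\{1,\dots,n-1\}$, the circulant digraph $C_n(S)$ has vertex set $\{v_0,\dots,v_{n-1}\}$ and arcs $v_iv_j$ for all $i,j$ with $j-i\equiv s \pmod n$ for some $s\in S$. For a strongly connected digraph $D$ and an arc-colouring $\Gamma:A(D)\to\{1,\dots,k\}$, a directed path is rainbow if its arcs have pairwise distinct colours. $\Gamma$ is rainbow connected if for every ordered pair of distinct vertices $x,y$ there is a rainbow directed $xy$-path; $rc^*(D)$ is the minimum number of colours of such a colouring. $\Gamma$ is strongly rainbow connected if for every ordered pair of distinct vertices $x,y$ there is a rainbow directed $xy$-path of length $d_D(x,y)$; $src^*(D)$ is the minimum such number. *)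

From mathcomp Require Import all_boot.
Set Implicit Arguments. Unset Strict Implicit. Unset Printing Implicit Defensive.

Section Digraphs.
Variable V : finType.

(* [dpath arc x p y]: x :: p is a directed path from x to y
   (consecutive vertices joined by arcs, all vertices distinct).
   Its length (number of arcs) is [size p]. *)
Definition dpath (arc : rel V) (x : V) (p : seq V) (y : V) : Prop :=
  [/\ path arc x p, last x p = y & uniq (x :: p)].

Definition path_colours (T : Type) (col : V -> V -> T) (x : V) (p : seq V) : seq T :=
  pairmap col x p.

Definition rainbow (c : nat) (col : V -> V -> 'I_c) (x : V) (p : seq V) : bool :=
  uniq (path_colours col x p).

Definition strongly_connected (arc : rel V) : Prop :=
  forall x y : V, x != y -> exists p, dpath arc x p y.

(* An arc-colouring with colours {1..c} (encoded as 'I_c) is rainbow connected *)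
Definition rainbow_connected (arc : rel V) (c : nat) (col : V -> V -> 'I_c) : Prop :=
  forall x y : V, x != y -> exists p, dpath arc x p y /\ rainbow col x p.

(* strongly rainbow connected: a rainbow path of length d(x,y), i.e. a rainbow
   path no longer than any directed xy-path. *)
Definition strongly_rainbow_connected (arc : rel V) (c : nat) (col : V -> V -> 'I_c) : Prop :=
  forall x y : V, x != y -> exists p, [/\ dpath arc x p y, rainbow col x p &
     forall q, dpath arc x q y -> size p <= size q].

Definition rc_star_eq (arc : rel V) (m : nat) : Prop :=
  (exists col : V -> V -> 'I_m, rainbow_connected arc col) /\
  (forall c (col : V -> V -> 'I_c), rainbow_connected arc col -> m <= c).

Definition src_star_eq (arc : rel V) (m : nat) : Prop :=
  (exists col : V -> V -> 'I_m, strongly_rainbow_connected arc col) /\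
  (forall c (col : V -> V -> 'I_c), strongly_rainbow_connected arc col -> m <= c).

End Digraphs.

(* Circulant digraph C_n(S) on vertices v_0..v_{n-1} (= 'I_n):
   arc v_i v_j iff (j - i) mod n lies in S. *)
Definition circulant_arc (n : nat) (S : pred nat) : rel 'I_n :=
  fun i j => ((j + n - i) %% n) \in S.

Definition interval1 (k : nat) : pred nat := fun s => (1 <= s) && (s <= k).

Definition ceil_div (n k : nat) : nat := (n + k - 1) %/ k.
Arguments circulant_arc n S : clear implicits.

From mathcomp Require Import all_boot zify.
Set Implicit Arguments. Unset Strict Implicit. Unset Printing Implicit Defensive.

(* Lower bound: a walk with m arcs advances at most m * k around the cycle, so
   every path from v_i to v_(i-1) has at least (n - 1) / k arcs.  With fewer than
   ceil(n/k) colours this forces c * k = n - 1 and every rainbow such path to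
   make c jumps of exactly k, so the colours of the k-jumps from i, i + k, ...,
   i + (c - 1) k are distinct for every i.  Comparing the windows at i and i + k
   shows that the colour of the k-jump from i has period c * k = n - 1; it also
   has period n, so it is constant, which contradicts c >= 2.
   Upper bound: colour each arc by the block floor(j / k) of its head v_j.  Any
   two vertices are joined by a shortest path that visits each block at most
   once; it is built from arithmetic progressions of step k on the integers. *)

Lemma uniq_size_ord c (s : seq 'I_c) : uniq s -> size s <= c.
Proof. by move/card_uniqP <-; exact: leq_trans (max_card _) (eq_leq (card_ord c)). Qed.

Section RainbowPaths.
Variables (V : finType) (arc : rel V) (c : nat) (col : V -> V -> 'I_c).

Lemma strongly_rainbow_connected_rainbow :
  strongly_rainbow_connected arc col -> rainbow_connected arc col.
Proof. by move=> src x y /src[p [? ? _]]; exists p. Qed.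

Lemma rainbow_size_le (x : V) p : rainbow col x p -> size p <= c.
Proof. by move/uniq_size_ord; rewrite /path_colours size_pairmap. Qed.

End RainbowPaths.

Lemma leq_ceil_div n k c : 0 < k -> (ceil_div n k <= c) = (n <= c * k).
Proof. by move=> k_gt0; rewrite /ceil_div -ltnS ltn_divLR // mulSn; lia. Qed.

Lemma ceil_div_bounds n k : 0 < k ->
  n <= ceil_div n k * k /\ ceil_div n k * k < n + k.
Proof.
move=> k_gt0; have := divn_eq (n + k - 1) k; have := ltn_pmod (n + k - 1) k_gt0.
rewrite /ceil_div; lia.
Qed.

Definition cdist (n u v : nat) : nat := if u <= v then v - u else v + n - u.

Lemma cdistE n (i j : 'I_n) : (j + n - i) %% n = cdist n i j.
Proof.
have := ltn_ord i; have := ltn_ord j; rewrite /cdist; case: (leqP i j) => ij jn in_.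
  by rewrite (_ : j + n - i = (j - i) + n) ?modnDr ?modn_small //; lia.
by rewrite modn_small //; lia.
Qed.

Lemma circulant_arcE n k (i j : 'I_n) :
  circulant_arc n (interval1 k) i j = (0 < cdist n i j <= k).
Proof. by rewrite /circulant_arc unfold_in /interval1 cdistE. Qed.

Lemma cdist_triangle n (a b c : 'I_n) : cdist n a c <= cdist n a b + cdist n b c.
Proof.
have := ltn_ord a; have := ltn_ord b; have := ltn_ord c.
rewrite /cdist; case: (leqP a c); case: (leqP a b); case: (leqP b c); lia.
Qed.

Lemma cdist_addmod n u t : u < n -> t < n -> cdist n u ((u + t) %% n) = t.
Proof.
move=> un tn; case: (ltnP (u + t) n) => utn.
  by rewrite modn_small // /cdist; case: (leqP u (u + t)); lia.
rewrite (_ : u + t = (u + t - n) + n); last lia.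
by rewrite modnDr modn_small /cdist; [case: (leqP u (u + t - n))|]; lia.
Qed.

Lemma addmod_cdist n u v : u < n -> v < n -> (u + cdist n u v) %% n = v.
Proof.
move=> un vn; rewrite /cdist; case: (leqP u v) => uv.
  by rewrite modn_small; lia.
by rewrite (_ : u + (v + n - u) = v + n) ?modnDr ?modn_small //; lia.
Qed.

Lemma circulant_path_cdist n k (x : 'I_n) p :
  path (circulant_arc n (interval1 k)) x p -> cdist n x (last x p) <= size p * k.
Proof.
elim: p x => [|y p IHp] x /=; first by rewrite /cdist leqnn subnn.
rewrite circulant_arcE => /andP[/andP[_ xy_le] /IHp yp_le].
by rewrite (leq_trans (cdist_triangle x y _)) // mulSn leq_add.
Qed.

Definition ord_mod n (n_gt0 : 0 < n) (t : nat) : 'I_n := Ordinal (ltn_pmod t n_gt0).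

Lemma ord_modDml n (n_gt0 : 0 < n) a b :
  ord_mod n_gt0 (a %% n + b) = ord_mod n_gt0 (a + b).
Proof. by apply: val_inj; rewrite /= modnDml. Qed.

Lemma ord_mod_ord n (n_gt0 : 0 < n) (x : 'I_n) : ord_mod n_gt0 x = x.
Proof. by apply: val_inj; rewrite /= modn_small. Qed.

Section LowerBound.
Variables (n k c : nat) (col : 'I_n -> 'I_n -> 'I_c).
Hypotheses (k_gt0 : 0 < k) (k_lt_n : k < n).

Let n_gt0 : 0 < n := leq_ltn_trans (leq0n k) k_lt_n.

Local Notation arc := (circulant_arc n (interval1 k)).

Definition stride_colour (t : nat) : 'I_c :=
  col (ord_mod n_gt0 t) (ord_mod n_gt0 (t + k)).

Definition stride_window (t m : nat) : seq 'I_c :=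
  [seq stride_colour (t + j * k) | j <- iota 0 m].

Lemma stride_colourDml a b : stride_colour (a %% n + b) = stride_colour (a + b).
Proof. by rewrite /stride_colour ord_modDml -addnA ord_modDml addnA. Qed.

Lemma stride_colour_mod t : stride_colour (t %% n) = stride_colour t.
Proof. by have := stride_colourDml t 0; rewrite !addn0. Qed.

Lemma stride_window_mod t m : stride_window (t %% n) m = stride_window t m.
Proof. by apply: eq_map => j; rewrite stride_colourDml. Qed.

Lemma stride_windowS t m :
  stride_window t m.+1 = stride_colour t :: stride_window (t + k) m.
Proof.
rewrite /stride_window /= mul0n addn0; congr (_ :: _).
rewrite (iotaDl 1 0) -map_comp; apply: eq_map => j /=.
by rewrite mulSn addnA.
Qed.

Lemma stride_window_rcons t m :
  stride_window t m.+1 = rcons (stride_window t m) (stride_colour (t + m * k)).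
Proof. by rewrite /stride_window -addn1 iotaD map_cat cats1. Qed.

Lemma tight_path_colours (x : 'I_n) p : path arc x p ->
  cdist n x (last x p) = size p * k -> path_colours col x p = stride_window x (size p).
Proof.
elim: p x => [|y p IHp] x //=; rewrite circulant_arcE => /andP[/andP[_ xy_le] yp].
have := circulant_path_cdist yp; have := cdist_triangle x y (last y p).
rewrite mulSn => tri yp_le xp_eq.
have xy_eq : cdist n x y = k by lia.
have y_eq : y = ord_mod n_gt0 (x + k).
  by apply: val_inj; rewrite /= -xy_eq addmod_cdist.
rewrite (IHp _ yp); last lia.
by rewrite stride_windowS y_eq /= stride_window_mod /stride_colour ord_mod_ord.
Qed.

Lemma stride_colour_periodic :
  0 < c -> (forall t, uniq (stride_window t c)) ->
  forall t, stride_colour (t + c * k) = stride_colour t.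
Proof.
move=> c_gt0 win_uniq t; apply/eqP/negPn/negP => neq.
have := win_uniq t; have := win_uniq (t + k).
rewrite -[in stride_window t c](prednK c_gt0) stride_windowS.
rewrite -[in stride_window _ c](prednK c_gt0) stride_window_rcons -addnA -mulSn.
rewrite rcons_uniq cons_uniq => /andP[notin_mid _] /andP[notin_first mid_uniq].
have := @uniq_size_ord c [:: stride_colour (t + c * k), stride_colour t
                            & stride_window (t + k) c.-1].
rewrite (prednK c_gt0) in notin_mid.
rewrite /= inE negb_or neq notin_first notin_mid mid_uniq size_map size_iota; lia.
Qed.

Hypothesis rc : rainbow_connected arc col.

Lemma rainbow_stride_window (x : 'I_n) :
  c * k < n -> c * k = n - 1 /\ uniq (stride_window x c).
Proof.
move=> ck_lt; set z := ord_mod n_gt0 (x + (n - 1)).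
have xz_eq : cdist n x z = n - 1 by rewrite cdist_addmod //; lia.
have xz : x != z.
  by apply/eqP => xz_eq'; move: xz_eq; rewrite -xz_eq' /cdist leqnn subnn; lia.
have [p [[xp last_p _] rainbow_p]] := rc xz.
have size_le : size p <= c := rainbow_size_le rainbow_p.
have cdist_le : n - 1 <= size p * k.
  by rewrite -xz_eq -last_p; exact: circulant_path_cdist.
have ck_le : c * k <= size p * k by apply: leq_trans cdist_le; lia.
have size_eq : size p = c.
  by apply/eqP; rewrite eqn_leq size_le -(leq_pmul2r k_gt0) ck_le.
have ck_eq : c * k = n - 1.
  apply/eqP; rewrite eqn_leq; apply/andP; split; first lia.
  by rewrite -[in c * k]size_eq.
split=> //; move: rainbow_p; rewrite /rainbow (tight_path_colours xp) ?size_eq //.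
by rewrite last_p xz_eq ck_eq.
Qed.

Lemma rainbow_connected_ceil_div : k <= n - 2 -> ceil_div n k <= c.
Proof.
move=> k_le; rewrite leq_ceil_div // leqNgt; apply/negP => ck_lt.
have [ck_eq _] := rainbow_stride_window (ord_mod n_gt0 0) ck_lt.
have win_uniq t : uniq (stride_window t c).
  by rewrite -stride_window_mod; have [] := rainbow_stride_window (ord_mod n_gt0 t) ck_lt.
have c_gt1 : 1 < c by rewrite -(ltn_pmul2r k_gt0) mul1n ck_eq; lia.
have period := stride_colour_periodic (ltnW c_gt1) win_uniq.
have step t : stride_colour t.+1 = stride_colour t.
  rewrite -(period t.+1) ck_eq (_ : t.+1 + (n - 1) = t + n); last lia.
  by rewrite -stride_colour_mod modnDr stride_colour_mod.
have const t : stride_colour t = stride_colour 0 by elim: t => // t IHt; rewrite step.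
have := win_uniq 0; rewrite [in stride_window 0 c](_ : c = c.-2.+2); last lia.
by rewrite /stride_window /= inE (const (0 + 0 * k)) (const (0 + 1 * k)) eqxx.
Qed.

End LowerBound.

Definition progression (s k m : nat) : seq nat := [seq s + j * k | j <- iota 0 m].

Lemma size_progression s k m : size (progression s k m) = m.
Proof. by rewrite size_map size_iota. Qed.

Lemma progressionS s k m : progression s k m.+1 = s :: progression (s + k) k m.
Proof.
rewrite /progression /= mul0n addn0 (iotaDl 1 0) -map_comp; congr (_ :: _).
by apply: eq_map => j /=; rewrite mulSn addnA.
Qed.

Definition lift_step (k : nat) : rel nat := fun a b => a < b <= a + k.

Lemma path_progression k a s m : 0 < k ->
  a < s <= a + k -> path (lift_step k) a (progression s k m).
Proof.
move=> k_gt0; elim: m a s => [|m IHm] a s as_step //.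
by rewrite progressionS /= {1}/lift_step as_step IHm //; lia.
Qed.

Lemma last_progression k a s m : last a (progression s k m.+1) = s + m * k.
Proof.
elim: m a s => [|m IHm] a s; first by rewrite /= mul0n.
by rewrite progressionS last_cons IHm mulSn addnA.
Qed.

Lemma all_progression (P : pred nat) s k m :
  (forall j, j < m -> P (s + j * k)) -> all P (progression s k m).
Proof.
move=> P_prog; apply/allP => t /mapP[j].
by rewrite mem_iota add0n => /andP[_ /P_prog P_j] ->.
Qed.

Definition block (n k t : nat) : nat := (t %% n) %/ k.

Lemma blocks_progression n k s m : 0 < k ->
  (forall j, j < m -> s + j * k < n) ->
  map (block n k) (progression s k m) = iota (s %/ k) m.
Proof.
move=> k_gt0 lt_n; rewrite -map_comp -[s %/ k]addn0 iotaDl; apply/eq_in_map => j.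
rewrite mem_iota add0n => /andP[_ /lt_n ?] /=.
by rewrite /block modn_small // addnC divnMDl // addnC.
Qed.

Lemma blocks_progressionDl n k s m :
  map (block n k) (progression (n + s) k m) = map (block n k) (progression s k m).
Proof. by rewrite -!map_comp; apply: eq_map => j /=; rewrite /block -addnA modnDl. Qed.

(* The lift to the integers of a shortest rainbow xy-path for the colouring by
   head blocks: [T] lists the lifts of the vertices after [x], increasing from
   [x] in steps of at most [k]. *)
Definition rainbow_lift (n k x y : nat) (T : seq nat) : Prop :=
  [/\ path (lift_step k) x T, last x T %% n = y, size T = ceil_div (cdist n x y) k,
      all (fun t => t %% n != x) T & uniq (map (block n k) T)].

Lemma rainbow_lift_forward n k x y :
  0 < k -> x < y -> y < n -> exists T, rainbow_lift n k x y T.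
Proof.
move=> k_gt0 xy yn; have [] := ceil_div_bounds (y - x) k_gt0.
rewrite /rainbow_lift /cdist (ltnW xy).
case: (ceil_div (y - x) k) => [|d] dk_ge dk_lt; first lia.
rewrite mulSn in dk_ge dk_lt.
have le_y j : j < d.+1 -> y - d * k + j * k <= y.
  by move=> j_lt; have := leq_mul (ltnSE j_lt) (leqnn k); lia.
exists (progression (y - d * k) k d.+1); split.
- by apply: path_progression => //; lia.
- by rewrite last_progression modn_small; lia.
- exact: size_progression.
- by apply: all_progression => j /le_y j_le; rewrite modn_small; lia.
- by rewrite blocks_progression ?iota_uniq // => j /le_y; lia.
Qed.

Section WrappedLift.
Variables (n k x y : nat).
Hypotheses (k_gt0 : 0 < k) (y_lt_x : y < x) (x_lt_n : x < n).

Let q := y %/ k.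
Let rho := y %% k.
Let tail := progression (n + rho) k q.+1.

Let y_eq : y = q * k + rho. Proof. exact: divn_eq. Qed.
Let rho_lt : rho < k. Proof. exact: ltn_pmod. Qed.

Let tail_le j : j < q.+1 -> rho + j * k <= y.
Proof. by move=> j_lt; have := leq_mul (ltnSE j_lt) (leqnn k); lia. Qed.

Let last_tail a : last a tail %% n = y.
Proof. by rewrite last_progression -addnA modnDl modn_small; lia. Qed.

Let all_tail : all (fun t => t %% n != x) tail.
Proof.
by apply: all_progression => j /tail_le j_le; rewrite -addnA modnDl modn_small; lia.
Qed.

Let blocks_tail : map (block n k) tail = iota 0 q.+1.
Proof.
rewrite blocks_progressionDl blocks_progression ?divn_small //.
by move=> j /tail_le j_le; lia.
Qed.

Lemma rainbow_lift_wrap : exists T, rainbow_lift n k x y T.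
Proof.
have [] := ceil_div_bounds (y + n - x) k_gt0.
rewrite /rainbow_lift /cdist (leqNgt x y) y_lt_x /=.
set d := ceil_div _ k => dk_ge dk_lt.
have q_lt_d : q < d by rewrite -(ltn_pmul2r k_gt0); lia.
have [p d_eq] : exists p, d = p + q.+1 by exists (d - q.+1); lia.
rewrite d_eq mulnDl mulSn in dk_ge dk_lt; rewrite d_eq {d d_eq q_lt_d}.
case: p dk_ge dk_lt => [|p] dk_ge dk_lt.
  exists tail; split => //; last by rewrite blocks_tail iota_uniq.
  - by apply: path_progression => //; lia.
  - exact: size_progression.
(* [c] is the largest shift for which the head still ends below [n] and starts
   within [k] of [x]; maximality keeps the head above the tail's blocks [0..q]. *)
set c := minn (k - 1 - rho) (p.+1 * k + (k + q * k) - (y + n - x)).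
set b := n + rho + c - p.+1 * k.
have c_le1 : c <= k - 1 - rho by apply: geq_minl.
have c_le2 : c <= p.+1 * k + (k + q * k) - (y + n - x) by apply: geq_minr.
have c_eq : c = k - 1 - rho \/ c = p.+1 * k + (k + q * k) - (y + n - x).
  by rewrite /c; case: leqP; [left | right].
rewrite mulSn in c_le2 c_eq b.
have head_lt j : j < p.+1 -> b + j * k < n.
  by move=> j_lt; have := leq_mul (ltnSE j_lt) (leqnn k); rewrite /b; lia.
have q_lt_b : q.+1 <= b %/ k by rewrite leq_divRL // mulSn /b; lia.
exists (progression b k p.+1 ++ tail); split.
- rewrite cat_path path_progression // ?last_progression ?path_progression //;
    rewrite /b; lia.
- by rewrite last_cat last_tail.
- by rewrite size_cat !size_progression addSn addnS.
- rewrite all_cat all_tail andbT; apply: all_progression => j /head_lt j_lt.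
  by rewrite modn_small; rewrite /b in j_lt *; lia.
- rewrite map_cat blocks_tail blocks_progression // cat_uniq !iota_uniq andbT andTb.
  by apply/hasPn => i; rewrite !mem_iota; lia.
Qed.

End WrappedLift.

Lemma rainbow_lift_exists n k x y :
  0 < k -> x < n -> y < n -> x != y -> exists T, rainbow_lift n k x y T.
Proof.
move=> k_gt0 xn yn; case: ltngtP => // [xy | yx] _.
  exact: rainbow_lift_forward.
exact: rainbow_lift_wrap.
Qed.

Lemma ord_divn_lt n k (w : 'I_n) : 0 < k -> w %/ k < ceil_div n k.
Proof.
move=> k_gt0; have := ltn_ord w; have := leq_divM w k.
by rewrite /ceil_div leq_divRL // mulSn; lia.
Qed.

Definition block_colouring n k (k_gt0 : 0 < k) : 'I_n -> 'I_n -> 'I_(ceil_div n k) :=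
  fun _ w => Ordinal (ord_divn_lt w k_gt0).

Lemma path_colours_target (V : finType) (U : Type) (g : V -> U) (x : V) p :
  path_colours (fun _ w => g w) x p = map g p.
Proof. by elim: p x => //= a p IHp x; rewrite IHp. Qed.

Lemma block_colouring_strongly_rainbow n k (k_gt0 : 0 < k) : k < n ->
  strongly_rainbow_connected (circulant_arc n (interval1 k)) (@block_colouring n k k_gt0).
Proof.
move=> k_lt_n; have n_gt0 : 0 < n by lia.
move=> x y xy; have [T [T_path T_last T_size T_avoid T_blocks]] :=
  rainbow_lift_exists k_gt0 (ltn_ord x) (ltn_ord y) xy.
have x_eq : ord_mod n_gt0 x = x := ord_mod_ord n_gt0 x.
exists (map (ord_mod n_gt0) T); split.
- split.
  + rewrite -{1}x_eq path_map; apply: sub_path T_path => a b /andP[ab b_le].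
    rewrite /relpre /= circulant_arcE /= (_ : b = a + (b - a)); last lia.
    by rewrite -modnDml cdist_addmod ?ltn_pmod //; lia.
  + by rewrite -{1}x_eq last_map; apply: val_inj.
  + rewrite cons_uniq; apply/andP; split.
      apply/mapP => -[t t_in /(congr1 val) /= t_eq].
      by move/allP: T_avoid => /(_ t t_in); rewrite -t_eq eqxx.
    by apply: (@map_uniq _ _ (fun w : 'I_n => w %/ k)); rewrite -map_comp.
- rewrite /rainbow path_colours_target; apply: (@map_uniq _ _ val).
  by rewrite -!map_comp.
- move=> p [p_path p_last _]; rewrite size_map T_size leq_ceil_div //.
  by rewrite -p_last; exact: circulant_path_cdist.
Qed.

Theorem theorem6 (n k : nat) :
  3 <= n -> 1 <= k -> k <= n - 2 ->
  rc_star_eq (circulant_arc n (interval1 k)) (ceil_div n k) /\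
  src_star_eq (circulant_arc n (interval1 k)) (ceil_div n k).
Proof.
move=> n_ge3 k_gt0 k_le; have k_lt_n : k < n by lia.
have src := block_colouring_strongly_rainbow k_gt0 k_lt_n.
have lower c (col : 'I_n -> 'I_n -> 'I_c) :
    rainbow_connected (circulant_arc n (interval1 k)) col -> ceil_div n k <= c.
  by move=> rc; exact: rainbow_connected_ceil_div k_gt0 k_lt_n rc k_le.
split; split.
- by exists (@block_colouring n k k_gt0); exact: strongly_rainbow_connected_rainbow.
- exact: lower.
- by exists (@block_colouring n k k_gt0).
- by move=> c col /strongly_rainbow_connected_rainbow; exact: lower.
Qed.
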